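(* Let $A\in\mathbb{R}^{m\times n}$ with $\operatorname{rk}(A)=m$, $b\in\mathbb{R}^m$, $P=\{x\in\mathbb{R}^n: Ax=b,\ x\ge\mathbb{0}\}$. Let $B\subseteq[n]$ be a feasible basis, $N=[n]\setminus B$, $x^*=(A_B^{-1}b,\mathbb{0}_N)\in P$, and let $x^{(0)}$ be a vertex of $P$. Consider the following procedure: for $t=0,1,\dots$, while $x^{(t)}\ne x^*$, take a conformal circuit decomposition $x^*-x^{(t)}=\sum_{j=1}^k h^{(j)}$ with $k\le n-m$, choose $g^{(t)}=h^{(j)}$ for some $j$ maximizing $\|h^{(j)}_N\|_1$, and set $x^{(t+1)}=\operatorname{aug}_P(x^{(t)},g^{(t)})$. Define $L_t=\{i\in[n]: x^*_i>n\kappa_A\|x^{(t)}_N\|_1\}$ and $R_t=\{i\in[n]: x^{(t)}_i\le(n-m)x^*_i\}$. Then for every iteration $t\ge0$, $L_t\subseteq L_{t+1}\subseteq B$ and $R_t\subseteq R_{t+1}$.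
   Context: An elementary vector of $\ker(A)$ is a nonzero $g\in\ker(A)$ with inclusion-minimal support among nonzero vectors of $\ker(A)$; $\kappa_A=\max\{|g_i|/|g_j|: g \text{ elementary},\ i,j\in\mathrm{supp}(g)\}$. Vectors $x,y$ are sign-compatible if $x_iy_i\ge0$ for all $i$; $x\sqsubseteq y$ means they are sign-compatible and $|x_i|\le|y_i|$ for all $i$. A conformal circuit decomposition of $x\in\ker(A)$ is an expression $x=\sum_{j=1}^k h^{(j)}$ with each $h^{(j)}$ elementary and $h^{(j)}\sqsubseteq x$ (one with $k\le n-m$ always exists). For $x\in P$ and elementary $g$, $\operatorname{aug}_P(x,g)=x+\alpha g$ with $\alpha=\max\{\bar\alpha: x+\bar\alpha g\in P\}$. *)

From mathcomp Require Import all_boot all_order all_algebra.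
From mathcomp Require Import classical_sets reals.
Set Implicit Arguments.
Unset Strict Implicit.
Unset Printing Implicit Defensive.
Import Order.TTheory GRing.Theory Num.Theory.
Local Open Scope ring_scope.

Section Defs.
Variables (R : realType) (m n : nat).
Implicit Types (A : 'M[R]_(m, n)) (b : 'cV[R]_m) (x y g h : 'cV[R]_n).

Definition supp x : {set 'I_n} := [set i | x i 0 != 0].

Definition inP A b x : Prop := A *m x = b /\ forall i, 0 <= x i 0.

Definition vertex A b x : Prop :=
  inP A b x /\
  forall y z (lam : R), inP A b y -> inP A b z -> 0 < lam < 1 ->
    x = lam *: y + (1 - lam) *: z -> y = z.

Definition elementary A g : Prop :=
  A *m g = 0 /\ g != 0 /\
  forall h, A *m h = 0 -> h != 0 -> supp h \subset supp g -> supp h = supp g.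

(* kappa_A = max { |g_i|/|g_j| : g elementary, i,j in supp g }
   (the set is finite; its supremum is its maximum; 0 if ker A = 0) *)
Definition kappa A : R :=
  sup [set r : R | exists g, elementary A g /\
        exists i j, i \in supp g /\ j \in supp g /\ r = `|g i 0| / `|g j 0| ].

Definition conf_le x y : Prop :=
  forall i, 0 <= x i 0 * y i 0 /\ `|x i 0| <= `|y i 0|.

Definition conf_decomp A x (hs : seq 'cV[R]_n) (k : nat) : Prop :=
  x = \sum_(h <- hs) h /\ (size hs <= k)%N /\
  forall h, h \in hs -> elementary A h /\ conf_le h x.

Definition is_aug A b x g y : Prop :=
  exists alpha : R, y = x + alpha *: g /\ inP A b (x + alpha *: g) /\
    forall a : R, inP A b (x + a *: g) -> a <= alpha.

Definition normN1 (B : {set 'I_n}) x : R := \sum_(i in ~: B) `|x i 0|.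

Definition colsB A (B : {set 'I_n}) : 'M[R]_(m, #|B|) :=
  colsub (fun k : 'I_#|B| => enum_val k) A.

End Defs.

From mathcomp Require Import all_boot all_order all_algebra.
From mathcomp Require Import classical_sets reals.
From mathcomp Require Import lra boolp.
Set Implicit Arguments.
Unset Strict Implicit.
Unset Printing Implicit Defensive.
Import Order.TTheory GRing.Theory Num.Theory.
Local Open Scope ring_scope.

(* The augmented point x + alpha g moves every coordinate of x towards x*
   (g is conformal to x* - x, and alpha >= 1 because x + g already lies in P),
   so ||x_N||_1 does not increase, which makes L_t grow; L_{t+1} lies in B
   because x*_N = 0.  On N we have g <= 0 and x + alpha g >= 0, whence
   alpha ||g_N||_1 <= ||x_N||_1 = ||(x* - x)_N||_1 <= (n - m) ||g_N||_1 by the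
   choice of g among at most n - m circuits, and g_N <> 0 since A_B is
   nonsingular; so alpha <= n - m, and then (x + alpha g)_i <= alpha x*_i
   wherever g_i > 0, which makes R_t grow. *)

Lemma kappa_ge0 (R : realType) m n (A : 'M[R]_(m, n)) : 0 <= kappa A.
Proof.
rewrite /kappa; set E := (X in sup X).
have [supE|/sup_out ->//] := pselect (has_sup E).
have [[r Er] _] := supE.
apply: le_trans (ub_le_sup supE.2 Er).
by case: Er => g [_ [i [j [_ [_ ->]]]]]; rewrite divr_ge0.
Qed.

Lemma conformal_between (R : realDomainType) (a d : R) :
  0 <= a * d -> `|a| <= `|d| -> (0 <= a <= d) || (d <= a <= 0).
Proof.
case: (lerP 0 a) => a0; case: (lerP 0 d) => d0;
  rewrite ?(ger0_norm a0) ?(ltr0_norm a0) ?(ger0_norm d0) ?(ltr0_norm d0);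
  move=> ad le_ad;
  apply/orP; first [left; apply/andP; split; nra | right; apply/andP; split; nra].
Qed.

Section OffBasisNorm.
Variables (R : realType) (m n : nat) (B : {set 'I_n}).
Implicit Types (v : 'cV[R]_n) (hs : seq 'cV[R]_n).

Lemma normN1_ge0 v : 0 <= normN1 B v.
Proof. exact: sumr_ge0. Qed.

Lemma normN1_eq0 v : normN1 B v = 0 -> forall j, j \notin B -> v j 0 = 0.
Proof.
move/psumr_eq0P => v0 j jB; apply/normr0_eq0/v0 => [i _|]; last by rewrite inE.
exact: normr_ge0.
Qed.

Lemma normN1_sum_le hs : normN1 B (\sum_(h <- hs) h) <= \sum_(h <- hs) normN1 B h.
Proof.
rewrite /normN1 exchange_big /=; apply: ler_sum => j _.
by rewrite summxE ler_norm_sum.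
Qed.

Lemma normN1_sum_le_size hs (k : nat) (c : R) :
  (size hs <= k)%N -> 0 <= c -> (forall h, h \in hs -> normN1 B h <= c) ->
  normN1 B (\sum_(h <- hs) h) <= k%:R * c.
Proof.
move=> size_hs c0 hs_le; apply: le_trans (normN1_sum_le hs) _.
apply: le_trans (_ : \sum_(h <- hs) c <= _).
  by rewrite big_seq [X in _ <= X]big_seq; apply: ler_sum.
rewrite big_const_seq count_predT iter_addr_0 -[c *+ _]mulr_natl.
by rewrite ler_wpM2r // ler_nat.
Qed.

Lemma normN1_subl (xs v : 'cV[R]_n) : (forall j, j \notin B -> xs j 0 = 0) ->
  normN1 B (xs - v) = normN1 B v.
Proof.
move=> xsN; apply: eq_bigr => j; rewrite inE => jB.
by rewrite !mxE xsN // sub0r normrN.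
Qed.

Variable A : 'M[R]_(m, n).
Hypothesis colsB_free : \rank (colsB A B) = #|B|.

Lemma kernel_offB_eq0 v :
  A *m v = 0 -> (forall j, j \notin B -> v j 0 = 0) -> v = 0.
Proof.
move=> Av vN; pose vB : 'cV[R]_#|B| := \col_k v (enum_val k) 0.
have AvB : colsB A B *m vB = 0.
  rewrite -Av; apply/matrixP => r c; rewrite (ord1 c) !mxE (bigID (mem B)) /=.
  rewrite [X in _ + X]big1 ?addr0; last by move=> j /vN ->; rewrite mulr0.
  rewrite (big_enum_val (fun j => A r j * v j 0)).
  by apply: eq_bigr => k _; rewrite !mxE.
have vB0 : vB = 0.
  have free : row_free (colsB A B)^T by rewrite /row_free mxrank_tr colsB_free.
  by apply/trmx_inj/eqP; rewrite trmx0 -(mulmx_free_eq0 _ free) -trmx_mul AvB trmx0.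
apply/matrixP => j c; rewrite (ord1 c) mxE.
have [jB|/vN //] := boolP (j \in B).
have := congr1 (fun w : 'cV[R]_#|B| => w (enum_rank_in jB j) 0) vB0.
by rewrite !mxE enum_rankK_in.
Qed.

Lemma normN1_kernel_gt0 v : A *m v = 0 -> v != 0 -> 0 < normN1 B v.
Proof.
move=> Av v_neq0; rewrite lt0r normN1_ge0 andbT.
by apply: contraNneq v_neq0 => /normN1_eq0/(@kernel_offB_eq0 _ Av) ->.
Qed.

End OffBasisNorm.

Section ConformalAugmentation.
Variables (R : realType) (m n : nat) (A : 'M[R]_(m, n)) (b : 'cV[R]_m).
Variables (xs x g : 'cV[R]_n) (alpha : R).
Hypotheses (Pxs : inP A b xs) (Px : inP A b x).
Hypotheses (Ag : A *m g = 0) (g_conf : conf_le g (xs - x)).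
Hypothesis alpha_max : forall a : R, inP A b (x + a *: g) -> a <= alpha.
Hypothesis P_aug : inP A b (x + alpha *: g).

Lemma conf_le_coord i :
  (0 <= g i 0 <= xs i 0 - x i 0) || (xs i 0 - x i 0 <= g i 0 <= 0).
Proof. by have [] := g_conf i; rewrite !mxE; apply: conformal_between. Qed.

Lemma inP_add_conf : inP A b (x + g).
Proof.
split; first by rewrite mulmxDr Px.1 Ag addr0.
move=> i; rewrite !mxE; have := Px.2 i; have := Pxs.2 i.
by case/orP: (conf_le_coord i) => /andP[]; lra.
Qed.

Lemma aug_step_ge1 : 1 <= alpha.
Proof. by apply: alpha_max; rewrite scale1r; exact: inP_add_conf. Qed.

Lemma aug_coord_ge0 i : 0 <= x i 0 + alpha * g i 0.
Proof. by have := P_aug.2 i; rewrite !mxE. Qed.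

Lemma conf_coord_le0 j : xs j 0 = 0 -> g j 0 <= 0.
Proof.
move=> xsj; have := Px.2 j; move: (conf_le_coord j); rewrite xsj.
by case/orP => /andP[]; lra.
Qed.

Lemma aug_coord_le (K : R) i : alpha <= K ->
  x i 0 <= K * xs i 0 -> (x + alpha *: g) i 0 <= K * xs i 0.
Proof.
rewrite !mxE => alpha_le x_le; have := aug_step_ge1; have := Px.2 i.
have := Pxs.2 i; case/orP: (conf_le_coord i) => /andP[]; nra.
Qed.

Variable B : {set 'I_n}.
Hypothesis xs_offB : forall j, j \notin B -> xs j 0 = 0.

Lemma normN1_aug_le : normN1 B (x + alpha *: g) <= normN1 B x.
Proof.
apply: ler_sum => j; rewrite inE => jB; rewrite !mxE.
rewrite !ger0_norm ?aug_coord_ge0 ?Px.2 //.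
have := conf_coord_le0 (xs_offB jB); have := aug_step_ge1; nra.
Qed.

Lemma aug_step_normN1_le : alpha * normN1 B g <= normN1 B x.
Proof.
rewrite /normN1 mulr_sumr; apply: ler_sum => j; rewrite inE => jB.
have gj_le0 := conf_coord_le0 (xs_offB jB); have := aug_coord_ge0 j.
rewrite (ger0_norm (Px.2 j)) (ler0_norm gj_le0); nra.
Qed.

Lemma aug_step_le (K : R) :
  0 < normN1 B g -> normN1 B x <= K * normN1 B g -> alpha <= K.
Proof.
by move=> g_gt0 x_le; rewrite -(ler_pM2r g_gt0) (le_trans aug_step_normN1_le).
Qed.

End ConformalAugmentation.

Theorem lemma3p2 (R : realType) (m n : nat)
  (A : 'M[R]_(m, n)) (b : 'cV[R]_m) (B : {set 'I_n}) (xs : 'cV[R]_n)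
  (x g : nat -> 'cV[R]_n) :
  \rank A = m ->
  (* B is a basis: |B| = m and A_B is nonsingular *)
  #|B| = m -> \rank (colsB A B) = m ->
  (* x* = (A_B^{-1} b, 0_N), and x* in P (feasibility of B) *)
  (forall i, i \notin B -> xs i 0 = 0) -> A *m xs = b -> inP A b xs ->
  vertex A b (x 0%N) ->
  (* the procedure, for every iteration t reached (x^(s) <> x* for s <= t) *)
  (forall t : nat, (forall s, (s <= t)%N -> x s != xs) ->
     (exists hs : seq 'cV[R]_n,
        conf_decomp A (xs - x t) hs (n - m) /\ g t \in hs /\
        forall h, h \in hs -> normN1 B h <= normN1 B (g t)) /\
     is_aug A b (x t) (g t) (x t.+1)) ->
  let L := fun t : nat =>
    [set i : 'I_n | n%:R * kappa A * normN1 B (x t) < xs i 0] in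
  let Rt := fun t : nat =>
    [set i : 'I_n | x t i 0 <= (n - m)%:R * xs i 0] in
  forall t : nat, (forall s, (s <= t)%N -> x s != xs) ->
    (L t \subset L t.+1) && (L t.+1 \subset B) && (Rt t \subset Rt t.+1).
Proof.
move=> _ cardB rankB xs_offB _ Pxs [Px0 _] step L Rt t reached.
have Pxt : inP A b (x t).
  case: t reached => [//|t] reached.
  have [_ [al [-> [P_aug _]]]] := step t (fun s st => reached s (leqW st)).
  exact: P_aug.
have [[hs [[dec [size_hs hs_conf]] [g_in g_max]]] aug] := step t reached.
have [[Ag [g_neq0 _]] g_conf] := hs_conf _ g_in.
case: aug => al [x_next [P_aug al_max]].
have g_gt0 : 0 < normN1 B (g t).
  by apply: normN1_kernel_gt0 Ag g_neq0; rewrite rankB cardB.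
have al_le : al <= (n - m)%:R.
  apply: (aug_step_le Pxt g_conf P_aug xs_offB g_gt0).
  rewrite -(normN1_subl (x t) xs_offB) dec.
  exact: normN1_sum_le_size size_hs (normN1_ge0 _ _) g_max.
rewrite /L /Rt x_next; apply/andP; split; [apply/andP; split|];
  apply/fintype.subsetP => i; rewrite !inE.
- apply: le_lt_trans; apply: ler_wpM2l; first by rewrite mulr_ge0 ?kappa_ge0.
  exact: (normN1_aug_le Pxs Pxt Ag g_conf al_max P_aug xs_offB).
- apply: contraLR => iNB; rewrite xs_offB // -leNgt.
  by rewrite !mulr_ge0 ?kappa_ge0 ?normN1_ge0.
- exact: (aug_coord_le Pxs Pxt Ag g_conf al_max).
Qed.
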